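(* Let $q\geq2$ be an integer and fix a real number $c>0$. Put $a_n=\frac{n(q-1)}{2q}\log(n(q-1))$ and $b_n=\frac{n(q-1)}{2q}$. Then $$\liminf_{n\to\infty}\Vert \nu_n^{*\lfloor a_n-cb_n\rfloor}-\pi_n\Vert_{TV}\geq 1-4qe^{-c}.$$
   Context: For integers $n\geq1$, $q\geq2$, the Hamming scheme $H(n,q)$ is the graph with vertex set $X_n=\{0,1,\dots,q-1\}^n$ in which $x$ and $x'$ are adjacent iff they differ in exactly one coordinate. The simple random walk has transition probability $p_n(x,x')=\frac{1}{n(q-1)}$ if $x,x'$ are adjacent and $0$ otherwise. Let $p_n^{(k)}$ denote the $k$-step transition probability ($p_n^{(0)}(x,x')=\delta_{x,x'}$), $x^{(0)}=(0,\dots,0)$, and $\nu_n^{*k}(x)=p_n^{(k)}(x^{(0)},x)$. $\pi_n$ is the uniform probability measure on $X_n$. For measures $\mu,\nu$ on $X_n$, $\Vert\mu-\nu\Vert_{TV}=\max_{S\subset X_n}|\mu(S)-\nu(S)|$. $\lfloor\alpha\rfloor$ is the greatest integer $\leq\alpha$. *)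

From Stdlib Require Import Reals.
From mathcomp Require Import all_boot.
Set Implicit Arguments. Unset Strict Implicit. Unset Printing Implicit Defensive.

Local Open Scope R_scope.

Definition HX (n q : nat) : finType := {ffun 'I_n -> 'I_q}.

Definition hadj (n q : nat) (x y : HX n q) : bool :=
  #|[set i : 'I_n | x i != y i]| == 1%N.

Definition hp (n q : nat) (x y : HX n q) : R :=
  if hadj x y then / (INR n * (INR q - 1)) else 0.

Fixpoint hpk {n q : nat} (k : nat) (x y : HX n q) {struct k} : R :=
  match k with
  | O => if x == y then 1 else 0
  | S k' => \big[Rplus/0]_(z : HX n q) (hpk k' x z * hp z y)
  end.

Definition horigin (n q : nat) (Hq : (0 < q)%N) : HX n q :=
  [ffun _ => Ordinal Hq].

Definition hnu (n q : nat) (Hq : (0 < q)%N) (k : nat) (x : HX n q) : R :=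
  hpk k (horigin n Hq) x.

Definition hpi (n q : nat) (x : HX n q) : R := / INR (q ^ n).

Definition hmeas (n q : nat) (mu : HX n q -> R) (S : {set HX n q}) : R :=
  \big[Rplus/0]_(x in S) mu x.

Definition TV (n q : nat) (mu nu : HX n q -> R) : R :=
  \big[Rmax/0]_(S : {set HX n q}) Rabs (hmeas mu S - hmeas nu S).

(* floor of a real number as a natural number (floor, truncated at 0) *)
Definition floorN (r : R) : nat := Z.to_nat (Int_part r).

(* Wilson's method.  The function f(x) = q * #{i | x_i = 0} - n, written as a
   sum of centred coordinate indicators, is an eigenfunction of the walk with
   eigenvalue lam = 1 - q/N, N = n(q-1).  Under nu_t its mean is lam^t N and
   its second moment exceeds the squared mean by at most qN/2, which also
   bounds its second moment under the uniform law.  Chebyshev's inequality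
   then makes the set {f > lam^t N / 2} likely for nu_t and unlikely for pi,
   so the distance is at least 1 - 4qN / (lam^t N)^2.  For
   t <= N/(2q) (ln N - c) one has (lam^t N)^2 >= e^c N^(1 - 2q/N), and
   N^(2q/N) -> 1. *)

From Stdlib Require Import Reals Lra ZArith.
From mathcomp Require Import all_boot Rstruct.
Set Implicit Arguments. Unset Strict Implicit. Unset Printing Implicit Defensive.
Local Open Scope R_scope.

Section FiniteSums.
Variable T : finType.
Implicit Types (F G : T -> R) (w : T -> R).

Lemma sumR_pred1 (u : T) F : \big[Rplus/0]_v (if v == u then F v else 0) = F u.
Proof. by rewrite -big_mkcond big_pred1_eq. Qed.

Lemma sumR_neq (u : T) F :
  \big[Rplus/0]_v (if v != u then F v else 0) = \big[Rplus/0]_v F v - F u.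
Proof.
rewrite -big_mkcond [X in _ = X - _](bigD1 u) //=.
by rewrite (eq_bigl (fun v => v != u)) //; ring.
Qed.

Lemma sumR_bigD1 (u : T) F :
  \big[Rplus/0]_v F v = F u + \big[Rplus/0]_(v | v != u) F v.
Proof. exact: bigD1. Qed.

Lemma sumR_const (c : R) : \big[Rplus/0]_(v : T) c = INR #|T| * c.
Proof.
rewrite big_const; elim: #|_| => [|k IH]; first by rewrite /=; ring.
by rewrite [iter _ _ _]/= IH S_INR; ring.
Qed.

Lemma sumR_affine (a b : R) G :
  \big[Rplus/0]_v (a + b * G v) = INR #|T| * a + b * \big[Rplus/0]_v G v.
Proof. by rewrite big_split /= sumR_const -big_distrr. Qed.

Lemma sumR_poly2 (a b c : R) G :
  \big[Rplus/0]_v (a + b * G v + c * G v ^ 2) =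
  INR #|T| * a + b * \big[Rplus/0]_v G v + c * \big[Rplus/0]_v G v ^ 2.
Proof. by rewrite !big_split /= sumR_const -!big_distrr. Qed.

Lemma sumR_le F G : (forall v, F v <= G v) ->
  \big[Rplus/0]_v F v <= \big[Rplus/0]_v G v.
Proof. by move=> FG; apply: (big_ind2 (fun x y => x <= y)) => // *; lra. Qed.

Lemma sumR_ge0 F : (forall v, 0 <= F v) -> 0 <= \big[Rplus/0]_v F v.
Proof. by move=> F0; apply: (big_ind (fun x => 0 <= x)) => // *; lra. Qed.

Definition expect w F : R := \big[Rplus/0]_x (w x * F x).

Lemma eq_expect w F G : (forall x, F x = G x) -> expect w F = expect w G.
Proof. by move=> FG; apply: eq_bigr => x _; rewrite FG. Qed.

Lemma expectD w F G : expect w (fun x => F x + G x) = expect w F + expect w G.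
Proof. by rewrite /expect -big_split; apply: eq_bigr => x _ /=; ring. Qed.

Lemma expectZ w (a : R) F : expect w (fun x => a * F x) = a * expect w F.
Proof. by rewrite /expect big_distrr; apply: eq_bigr => x _ /=; ring. Qed.

Lemma expect_const w (a : R) : expect w (fun=> a) = a * expect w (fun=> 1).
Proof. by rewrite /expect big_distrr; apply: eq_bigr => x _ /=; ring. Qed.

Lemma le_expect w F G : (forall x, 0 <= w x) -> (forall x, F x <= G x) ->
  expect w F <= expect w G.
Proof. by move=> w0 FG; apply: sumR_le => x; apply: Rmult_le_compat_l. Qed.

End FiniteSums.

Section HammingWalk.
Variables n q : nat.
Implicit Types (x y : HX n q) (F : HX n q -> R).

Definition hupd x (i : 'I_n) (v : 'I_q) : HX n q :=
  [ffun j => if j == i then v else x j].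

Lemma hupd_eq_diff_set x y i v :
  (v != x i) && (y == hupd x i v) = ([set j | x j != y j] == [set i]) && (v == y i).
Proof.
apply/idP/idP.
- move=> /andP[vx /eqP ->]; rewrite ffunE !eqxx andbT.
  apply/eqP/setP => j; rewrite !inE ffunE.
  by case: (eqVneq j i) => [->|_]; rewrite ?eqxx // eq_sym.
- move=> /andP[/eqP dxy /eqP ->].
  have xy_i : x i != y i by have := set11 i; rewrite -dxy inE.
  rewrite eq_sym xy_i; apply/eqP/ffunP => j; rewrite ffunE.
  case: (eqVneq j i) => [->//|ji].
  have : j \notin [set i] by rewrite inE.
  by rewrite -dxy inE negbK => /eqP.
Qed.

Lemma hadj_count x y : (if hadj x y then 1 else 0) =
  \big[Rplus/0]_i \big[Rplus/0]_v (if (v != x i) && (y == hupd x i v) then 1 else 0).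
Proof.
under eq_bigr => i _ do under eq_bigr => v _ do rewrite hupd_eq_diff_set.
have sum_v i : \big[Rplus/0]_v
    (if ([set j | x j != y j] == [set i]) && (v == y i) then 1 else 0) =
    if [set j | x j != y j] == [set i] then 1 else 0.
  case: ifP => _ /=; last by rewrite big1.
  exact: (sumR_pred1 (y i) (fun=> 1)).
rewrite (eq_bigr _ (fun i _ => sum_v i)) /hadj.
case: (@cards1P _ [set j | x j != y j]) => [[i0 ->]|no_i0].
- rewrite (eq_bigr (fun i => if i == i0 then 1 else 0)).
    by rewrite (sumR_pred1 i0 (fun=> 1)).
  move=> i _; congr (if _ then _ else _).
  by apply/eqP/eqP => [/set1_inj->|->].
- by rewrite big1 // => i _; case: eqP => // dxy; case: no_i0; exists i.
Qed.

Definition hdeg : R := INR n * (INR q - 1).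

Definition hP F x : R := \big[Rplus/0]_y (hp x y * F y).

Lemma hPE F x : hP F x =
  / hdeg * \big[Rplus/0]_i \big[Rplus/0]_v (if v != x i then F (hupd x i v) else 0).
Proof.
have hpF y : hp x y * F y = / hdeg * ((if hadj x y then 1 else 0) * F y).
  by rewrite /hp /hdeg; case: hadj; ring.
rewrite /hP (eq_bigr _ (fun y _ => hpF y)) -big_distrr /=; congr (_ * _).
under eq_bigr => y _ do rewrite hadj_count big_distrl /=.
rewrite exchange_big /=; apply: eq_bigr => i _.
under eq_bigr => y _ do rewrite big_distrl /=.
rewrite exchange_big /=; apply: eq_bigr => v _.
case: (v != x i) => /=; last by rewrite big1 // => y _; ring.
rewrite -(sumR_pred1 (hupd x i v) F); apply: eq_bigr => y _.
by case: eqP => _; ring.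
Qed.

Lemma hp_sym x y : hp x y = hp y x.
Proof.
rewrite /hp /hadj; suff -> : [set i | x i != y i] = [set i | y i != x i] by [].
by apply/setP => i; rewrite !inE eq_sym.
Qed.

Lemma hP_one x : hdeg <> 0 -> hP (fun=> 1) x = 1.
Proof.
move=> hdeg0; rewrite hPE.
under eq_bigr => i _ do rewrite (sumR_neq (x i) (fun=> 1)) sumR_const card_ord.
rewrite sumR_const card_ord Rmult_1_r; exact: Rinv_l.
Qed.

End HammingWalk.

Section Eigenfunction.
Variables (n q : nat) (Hq : (0 < q)%N).
Implicit Types (x : HX n q).

Definition center0 (a : 'I_q) : R := (if a == Ordinal Hq then INR q else 0) - 1.

Definition eigf x : R := \big[Rplus/0]_i center0 (x i).

Lemma sum_center0 : \big[Rplus/0]_v center0 v = 0.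
Proof.
rewrite /center0 /Rminus big_split /= (sumR_pred1 (Ordinal Hq) (fun=> INR q)).
by rewrite sumR_const card_ord; ring.
Qed.

Lemma sum_center0_sq : \big[Rplus/0]_v center0 v ^ 2 = INR q * (INR q - 1).
Proof.
have center0_sq v :
    center0 v ^ 2 = (if v == Ordinal Hq then INR q * (INR q - 2) else 0) + 1.
  by rewrite /center0; case: (v == _); ring.
rewrite (eq_bigr _ (fun v _ => center0_sq v)) big_split /=.
by rewrite (sumR_pred1 (Ordinal Hq) (fun=> INR q * (INR q - 2))) sumR_const card_ord; ring.
Qed.

Lemma eigf_hupd x i v : eigf (hupd x i v) = eigf x - center0 (x i) + center0 v.
Proof.
have off_i : \big[Rplus/0]_(j | j != i) center0 (hupd x i v j) =
    \big[Rplus/0]_(j | j != i) center0 (x j).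
  by apply: eq_bigr => j /negbTE ji; rewrite ffunE ji.
rewrite /eigf (sumR_bigD1 i) [in RHS](sumR_bigD1 i) off_i ffunE eqxx; ring.
Qed.

Lemma eigf_horigin : eigf (horigin n Hq) = hdeg n q.
Proof.
rewrite /eigf (eq_bigr (fun=> INR q - 1)) ?sumR_const ?card_ord //.
by move=> i _; rewrite ffunE /center0 eqxx.
Qed.

Lemma hP_eigf x : hdeg n q <> 0 -> hP eigf x = (1 - INR q / hdeg n q) * eigf x.
Proof.
move=> hdeg0; rewrite hPE.
have sum_v i : \big[Rplus/0]_v (if v != x i then eigf (hupd x i v) else 0) =
    (INR q - 1) * eigf x + - INR q * center0 (x i).
  rewrite (sumR_neq (x i) (fun v => eigf (hupd x i v))).
  under eq_bigr => v _ do rewrite eigf_hupd -[center0 v]Rmult_1_l.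
  by rewrite eigf_hupd sumR_affine sum_center0 card_ord; ring.
rewrite (eq_bigr _ (fun i _ => sum_v i)) sumR_affine card_ord -/(eigf x).
have -> : INR n * ((INR q - 1) * eigf x) = hdeg n q * eigf x by rewrite /hdeg; ring.
by field.
Qed.

Lemma hP_eigf2 x : hP (fun y => eigf y ^ 2) x =
  / hdeg n q * (eigf x ^ 2 * (hdeg n q - 2 * INR q)
     + INR q * \big[Rplus/0]_i center0 (x i) ^ 2 + INR n * INR q * (INR q - 1)).
Proof.
rewrite hPE; congr (_ * _).
have sum_v i : \big[Rplus/0]_v (if v != x i then eigf (hupd x i v) ^ 2 else 0) =
    (INR q * eigf x ^ 2 + INR q * (INR q - 1) - eigf x ^ 2)
    + (- 2 * INR q * eigf x) * center0 (x i) + INR q * center0 (x i) ^ 2.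
  rewrite (sumR_neq (x i) (fun v => eigf (hupd x i v) ^ 2)).
  have expand v : eigf (hupd x i v) ^ 2 = (eigf x - center0 (x i)) ^ 2
      + 2 * (eigf x - center0 (x i)) * center0 v + 1 * center0 v ^ 2.
    by rewrite eigf_hupd; ring.
  rewrite (eq_bigr _ (fun v _ => expand v)) sumR_poly2 sum_center0 sum_center0_sq.
  by rewrite eigf_hupd card_ord; ring.
rewrite (eq_bigr _ (fun i _ => sum_v i)) sumR_poly2 card_ord -/(eigf x) /hdeg; ring.
Qed.

Lemma hP_eigf2_le x : 2 <= INR q -> 0 < hdeg n q ->
  hP (fun y => eigf y ^ 2) x <= INR q ^ 2 + (1 - 2 * INR q / hdeg n q) * eigf x ^ 2.
Proof.
move=> q_ge2 hdeg_gt0; rewrite hP_eigf2.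
have sum_sq_le : \big[Rplus/0]_i center0 (x i) ^ 2 <= INR n * (INR q - 1) ^ 2.
  apply: (Rle_trans _ (\big[Rplus/0]_(i : 'I_n) (INR q - 1) ^ 2)).
    apply: sumR_le => i; rewrite /center0; case: (_ == _); nra.
  by rewrite sumR_const card_ord; right.
have -> : INR q ^ 2 + (1 - 2 * INR q / hdeg n q) * eigf x ^ 2 =
    / hdeg n q * (eigf x ^ 2 * (hdeg n q - 2 * INR q) + INR q ^ 2 * hdeg n q).
  by field; lra.
apply: Rmult_le_compat_l; first exact/Rlt_le/Rinv_0_lt_compat.
have := pos_INR n; rewrite /hdeg; nra.
Qed.

End Eigenfunction.

Lemma TV_ge_hmeas n q (mu nu : HX n q -> R) S :
  TV mu nu >= Rabs (hmeas mu S - hmeas nu S).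
Proof.
apply: Rle_ge; rewrite /TV.
elim: (index_enum _) (mem_index_enum S) => [//|S' Ss IH]; rewrite inE big_cons.
by case/orP=> [/eqP <-|/IH]; [apply: Rmax_l | move/Rle_trans; apply; apply: Rmax_r].
Qed.

Lemma hmeasE n q (w : HX n q -> R) S :
  hmeas w S = expect w (fun x => if x \in S then 1 else 0).
Proof. by rewrite /hmeas big_mkcond; apply: eq_bigr => x _; case: (x \in S); ring. Qed.

Lemma TV_ge_second_moment n q (mu nu f : HX n q -> R) (m V : R) :
  0 < m -> (forall x, 0 <= mu x) -> (forall x, 0 <= nu x) ->
  expect mu (fun=> 1) = 1 -> expect mu f = m ->
  expect mu (fun x => f x ^ 2) <= m ^ 2 + V ->
  expect nu (fun x => f x ^ 2) <= V ->
  TV mu nu >= 1 - 8 * V / m ^ 2.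
Proof.
move=> m_gt0 mu_ge0 nu_ge0 mu_one mu_f mu_f2 nu_f2.
(* Chebyshev in the form 1 - 4 (f/m - 1)^2 <= 1_S <= 4 (f/m)^2. *)
pose S := [set x | Rltb (m / 2) (f x)].
have ind_ge x : -3 + 8 / m * f x + - 4 / m ^ 2 * f x ^ 2 <= (if x \in S then 1 else 0).
  have -> : -3 + 8 / m * f x + - 4 / m ^ 2 * f x ^ 2 = 1 - 4 * (f x / m - 1) ^ 2.
    by field; lra.
  have := pow2_ge_0 (f x / m - 1).
  rewrite inE; case: RltbP => [_|/Rnot_lt_le fx_le] /=; first lra.
  suff : f x / m <= 1 / 2 by nra.
  apply: (Rmult_le_reg_r m) => //.
  by rewrite (_ : f x / m * m = f x); [lra | field; lra].
have ind_le x : (if x \in S then 1 else 0) <= 4 / m ^ 2 * f x ^ 2.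
  have -> : 4 / m ^ 2 * f x ^ 2 = 4 * (f x / m) ^ 2 by field; lra.
  have := pow2_ge_0 (f x / m).
  rewrite inE; case: RltbP => [fx_gt|_] /=; last lra.
  suff : 1 / 2 < f x / m by nra.
  apply: (Rmult_lt_reg_r m) => //.
  by rewrite (_ : f x / m * m = f x); [lra | field; lra].
have mu_S := le_expect mu_ge0 ind_ge.
have nu_S := le_expect nu_ge0 ind_le.
rewrite !expectD expect_const !expectZ mu_one mu_f in mu_S nu_S.
apply: Rge_trans (TV_ge_hmeas mu nu S) _; rewrite !hmeasE.
apply/Rle_ge/(Rle_trans _ _ _ _ (Rle_abs _)).
have k_gt0 : 0 < 4 / m ^ 2 by apply: Rdiv_lt_0_compat; nra.
have mu_k := Rmult_le_compat_l _ _ _ (Rlt_le _ _ k_gt0) mu_f2.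
have nu_k := Rmult_le_compat_l _ _ _ (Rlt_le _ _ k_gt0) nu_f2.
rewrite (_ : 8 / m * m = 8) in mu_S; last by field; lra.
rewrite (_ : 4 / m ^ 2 * (m ^ 2 + V) = 4 + 4 / m ^ 2 * V) in mu_k; last by field; lra.
rewrite (_ : 8 * V / m ^ 2 = 2 * (4 / m ^ 2 * V)); last by field; lra.
lra.
Qed.

Section WalkMoments.
Variables (n q : nat) (Hq : (0 < q)%N).
Hypotheses (q_ge2 : 2 <= INR q) (hdeg_ge : 2 * INR q <= hdeg n q).
Implicit Types (x y : HX n q) (F : HX n q -> R).

Local Notation nu t := (@hnu n q Hq t).
Local Notation f := (eigf Hq).
Local Notation lam := (1 - INR q / hdeg n q).
Local Notation lam2 := (1 - 2 * INR q / hdeg n q).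

Let hdeg_gt0 : 0 < hdeg n q.
Proof. lra. Qed.

Let hdeg_neq0 : hdeg n q <> 0.
Proof. lra. Qed.

Let lam2_ge0 : 0 <= lam2.
Proof.
suff : 2 * INR q / hdeg n q <= 1 by lra.
apply: (Rmult_le_reg_r (hdeg n q)) => //.
by rewrite (_ : _ / _ * _ = 2 * INR q); [lra | field].
Qed.

Lemma hp_ge0 x y : 0 <= hp x y.
Proof. by rewrite /hp; case: hadj; [exact/Rlt_le/Rinv_0_lt_compat | right]. Qed.

Lemma hpk_ge0 t x y : 0 <= hpk t x y.
Proof.
elim: t y => [|t IH] y /=; first by case: (x == y); lra.
by apply: sumR_ge0 => z; apply: Rmult_le_pos; [apply: IH | apply: hp_ge0].
Qed.

Lemma hnu_ge0 t x : 0 <= nu t x.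
Proof. exact: hpk_ge0. Qed.

Lemma expect_hnuS t F : expect (nu t.+1) F = expect (nu t) (hP F).
Proof.
rewrite /expect /hnu /=.
under eq_bigr => y _ do rewrite big_distrl /=.
rewrite exchange_big /=; apply: eq_bigr => z _.
by rewrite big_distrr /=; apply: eq_bigr => y _; ring.
Qed.

Lemma expect_hnu0 F : expect (nu 0) F = F (horigin n Hq).
Proof.
rewrite /expect /hnu /= -(sumR_pred1 (horigin n Hq) F).
by apply: eq_bigr => y _; rewrite eq_sym; case: (_ == _); ring.
Qed.

Lemma expect_hnu_one t : expect (nu t) (fun=> 1) = 1.
Proof.
elim: t => [|t IH]; first by rewrite expect_hnu0.
rewrite expect_hnuS -{2}IH; apply: eq_expect => x.
exact: hP_one.
Qed.

Lemma expect_hnu_eigf t : expect (nu t) f = lam ^ t * hdeg n q.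
Proof.
elim: t => [|t IH]; first by rewrite expect_hnu0 eigf_horigin /=; ring.
rewrite expect_hnuS (eq_expect _ (fun x => hP_eigf Hq x hdeg_neq0)).
by rewrite expectZ IH /=; ring.
Qed.

Lemma expect_hnu_eigf2_le t :
  expect (nu t) (fun x => f x ^ 2) <= lam2 ^ t * hdeg n q ^ 2 + INR q * hdeg n q / 2.
Proof.
elim: t => [|t IH].
  by rewrite expect_hnu0 eigf_horigin /=; nra.
rewrite expect_hnuS.
apply: Rle_trans (le_expect (hnu_ge0 t) (fun x => hP_eigf2_le Hq x q_ge2 hdeg_gt0)) _.
rewrite expectD expect_const expectZ expect_hnu_one.
have := Rmult_le_compat_l _ _ _ lam2_ge0 IH.
rewrite (_ : lam2 ^ t.+1 = lam2 * lam2 ^ t) //.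
have : INR q ^ 2 + lam2 * (INR q * hdeg n q / 2) = INR q * hdeg n q / 2 by field; lra.
lra.
Qed.

Lemma hpi_ge0 x : 0 <= hpi x.
Proof.
apply/Rlt_le/Rinv_0_lt_compat/lt_0_INR/ltP.
by rewrite expn_gt0 Hq.
Qed.

Lemma expect_hpi_one : expect (@hpi n q) (fun=> 1) = 1.
Proof.
rewrite /expect /hpi (eq_bigr (fun=> / INR (q ^ n))); last by move=> x _; ring.
rewrite sumR_const card_ffun !card_ord; field.
by apply: not_0_INR; apply/eqP; rewrite -lt0n expn_gt0 Hq.
Qed.

Lemma expect_hpi_hP F : expect (@hpi n q) (hP F) = expect (@hpi n q) F.
Proof.
rewrite /expect /hP.
under eq_bigr => x _ do rewrite big_distrr /=.
rewrite exchange_big /=; apply: eq_bigr => y _.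
have reversed x : hpi x * (hp x y * F y) = (hpi y * F y) * (hp y x * 1).
  by rewrite hp_sym /hpi; ring.
rewrite (eq_bigr _ (fun x _ => reversed x)) -big_distrr /=.
by rewrite -/(hP (fun=> 1) y) hP_one ?Rmult_1_r.
Qed.

Lemma expect_hpi_eigf2_le : expect (@hpi n q) (fun x => f x ^ 2) <= INR q * hdeg n q / 2.
Proof.
have := le_expect hpi_ge0 (fun x => hP_eigf2_le Hq x q_ge2 hdeg_gt0).
rewrite expect_hpi_hP expectD expect_const expectZ expect_hpi_one => stationary.
apply: (Rmult_le_reg_l (2 * INR q / hdeg n q)); first by apply: Rdiv_lt_0_compat; lra.
rewrite (_ : 2 * INR q / hdeg n q * (INR q * hdeg n q / 2) = INR q ^ 2); last by field; lra.
lra.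
Qed.

Lemma TV_hnu_hpi_ge t :
  TV (nu t) (@hpi n q) >= 1 - 4 * INR q * hdeg n q / (lam ^ t * hdeg n q) ^ 2.
Proof.
have lam_gt0 : 0 < lam.
  have : 0 < INR q / hdeg n q by apply: Rdiv_lt_0_compat; lra.
  lra.
have m_gt0 : 0 < lam ^ t * hdeg n q by apply: Rmult_lt_0_compat => //; apply: pow_lt.
have lam2_le : lam2 ^ t <= (lam ^ t) ^ 2.
  by rewrite -pow_mult Nat.mul_comm pow_mult; apply: pow_incr; split; last nra.
rewrite (_ : 4 * INR q * hdeg n q = 8 * (INR q * hdeg n q / 2)); last by field.
apply: (TV_ge_second_moment m_gt0 (hnu_ge0 t) hpi_ge0 (expect_hnu_one t)).
- exact: expect_hnu_eigf.
- apply: Rle_trans (expect_hnu_eigf2_le t) _.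
  suff : lam2 ^ t * hdeg n q ^ 2 <= (lam ^ t * hdeg n q) ^ 2 by lra.
  by rewrite Rpow_mult_distr; apply: Rmult_le_compat_r => //; nra.
- exact: expect_hpi_eigf2_le.
Qed.

End WalkMoments.

Lemma exp_le_exp a b : a <= b -> exp a <= exp b.
Proof. by case=> [/exp_increasing/Rlt_le|->]; [|right]. Qed.

Lemma exp_INR_mul k a : exp (INR k * a) = exp a ^ k.
Proof.
elim: k => [|k IH]; first by rewrite Rmult_0_l exp_0.
by rewrite S_INR /= -IH -exp_plus; congr exp; ring.
Qed.

Lemma exp_neg_le_one_sub x : 0 <= x <= 1 / 2 -> exp (- (x + 2 * x ^ 2)) <= 1 - x.
Proof.
move=> x_bd; set y := x + 2 * x ^ 2.
have : 1 <= (1 - x) * exp y.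
  apply: (Rle_trans _ ((1 - x) * (1 + y))); first by rewrite /y; nra.
  by apply: Rmult_le_compat_l; [lra | apply: exp_ineq1_le].
rewrite exp_Ropp => prod_ge1.
have ey := exp_pos y.
apply: (Rmult_le_reg_r (exp y)) => //.
by rewrite Rinv_l; [lra | apply: Rgt_not_eq].
Qed.

Lemma ln_le_2sqrt N : 0 < N -> ln N <= 2 * sqrt N.
Proof.
move=> N_gt0; have s_gt0 := sqrt_lt_R0 _ N_gt0.
rewrite -{1}(sqrt_sqrt N) ?ln_mult; try lra.
suff : ln (sqrt N) < sqrt N by lra.
rewrite -{2}(ln_exp (sqrt N)); apply: ln_increasing => //.
have := exp_ineq1_le (sqrt N); lra.
Qed.

Lemma exp_ln_div_eventually_le (Q d : R) : 0 < Q -> 0 < d ->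
  exists K, forall N, K <= N -> exp (2 * Q * ln N / N) <= 1 + d.
Proof.
move=> Q_gt0 d_gt0.
have ld_gt0 : 0 < ln (1 + d) by rewrite -ln_1; apply: ln_increasing; lra.
exists (Rmax 1 ((4 * Q / ln (1 + d)) ^ 2)) => N N_ge.
have N_ge1 := Rle_trans _ _ _ (Rmax_l _ _) N_ge.
have N_big := Rle_trans _ _ _ (Rmax_r _ _) N_ge.
have s_gt0 : 0 < sqrt N by apply: sqrt_lt_R0; lra.
have s_big : 4 * Q / ln (1 + d) <= sqrt N.
  rewrite -(sqrt_pow2 (4 * Q / ln (1 + d))); last by apply/Rlt_le/Rdiv_lt_0_compat; lra.
  by apply: sqrt_le_1_alt.
rewrite -(exp_ln (1 + d)); last lra.
apply: exp_le_exp.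
have ln_N := @ln_le_2sqrt N ltac:(lra).
apply: (Rle_trans _ (4 * Q / sqrt N)).
  apply: (Rmult_le_reg_r N); first lra.
  rewrite (_ : 2 * Q * ln N / N * N = 2 * Q * ln N); last by field; lra.
  rewrite (_ : 4 * Q / sqrt N * N = 2 * Q * (2 * sqrt N)); first nra.
  by rewrite -{2}(sqrt_sqrt N); [field | ]; lra.
apply: (Rmult_le_reg_r (sqrt N / ln (1 + d))); first exact: Rdiv_lt_0_compat.
rewrite (_ : 4 * Q / sqrt N * (sqrt N / ln (1 + d)) = 4 * Q / ln (1 + d)); last by field; lra.
by rewrite (_ : ln (1 + d) * (sqrt N / ln (1 + d)) = sqrt N); last by field; lra.
Qed.

Lemma pow_one_sub_cutoff_le (Q N c : R) (t : nat) :
  0 < Q -> 2 * Q <= N -> 0 <= c -> INR t <= N / (2 * Q) * (ln N - c) ->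
  N / ((1 - Q / N) ^ t * N) ^ 2 <= exp (- c) * exp (2 * Q * ln N / N).
Proof.
move=> Q_gt0 QN c_ge0 t_le.
have N_gt0 : 0 < N by lra.
have t_ge0 := pos_INR t.
set x := Q / N.
have x_gt0 : 0 < x by apply: Rdiv_lt_0_compat.
have x_le : x <= 1 / 2.
  apply: (Rmult_le_reg_r N) => //.
  by rewrite (_ : x * N = Q); [lra | rewrite /x; field; lra].
have tx_le : 2 * INR t * x <= ln N - c.
  rewrite (_ : ln N - c = 2 * x * (N / (2 * Q) * (ln N - c))); last by rewrite /x; field; lra.
  nra.
have step := @exp_neg_le_one_sub x (conj (Rlt_le _ _ x_gt0) x_le).
have pow_ge : exp (- (INR t * (x + 2 * x ^ 2))) <= (1 - x) ^ t.
  rewrite Ropp_mult_distr_r exp_INR_mul; apply: pow_incr; split => //.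
  exact/Rlt_le/exp_pos.
have pow2_ge : exp (- (ln N - c) - 2 * x * ln N) <= ((1 - x) ^ t) ^ 2.
  apply: (Rle_trans _ (exp (- (INR t * (x + 2 * x ^ 2))) ^ 2)).
    rewrite -exp_INR_mul; apply: exp_le_exp; simpl INR; nra.
  by apply: pow_incr; split => //; exact/Rlt_le/exp_pos.
set E := exp c * exp (- (2 * x * ln N)).
have E_gt0 : 0 < E by apply: Rmult_lt_0_compat; apply: exp_pos.
have E_le : E <= N * ((1 - x) ^ t) ^ 2.
  have : exp (- (ln N - c) - 2 * x * ln N) = / N * E.
    rewrite /E (_ : _ - _ = - ln N + (c + - (2 * x * ln N))); last ring.
    by rewrite !exp_plus exp_Ropp exp_ln.
  have : N * (/ N * E) = E by field; lra.
  nra.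
have P_neq0 : (1 - x) ^ t <> 0 by apply: pow_nonzero; lra.
rewrite (_ : 2 * Q * ln N / N = 2 * x * ln N); last by rewrite /x; field; lra.
rewrite (_ : exp (- c) * exp (2 * x * ln N) = / E).
  rewrite (_ : N / _ = / (N * ((1 - x) ^ t) ^ 2)); last by field; split => //; lra.
  exact: Rinv_le_contravar.
by rewrite /E !exp_Ropp Rinv_mult Rinv_inv.
Qed.

Lemma floorN_le r : 0 <= r -> INR (floorN r) <= r.
Proof.
move=> r_ge0; rewrite /floorN; have [ip_le _] := base_Int_part r.
case: (Int_part r) ip_le => [|p|p] /= ip_le //.
by rewrite INR_IZR_INZ positive_nat_Z.
Qed.

Theorem corollary4p5 (q : nat) (hq : (2 <= q)%N) (c : R) (hc : 0 < c) :
  let a := fun n : nat => INR n * (INR q - 1) / (2 * INR q) * ln (INR n * (INR q - 1)) in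
  let b := fun n : nat => INR n * (INR q - 1) / (2 * INR q) in
  forall eps : R, 0 < eps ->
  exists N : nat, forall n : nat, (N <= n)%nat ->
    TV (@hnu n q (ltnW hq) (floorN (a n - c * b n))) (@hpi n q)
      >= 1 - 4 * INR q * exp (- c) - eps.
Proof.
move=> a b eps eps_gt0.
have q_ge2 : 2 <= INR q by have := le_INR 2 q (elimT leP hq).
have q_gt0 : 0 < INR q by lra.
have q4_gt0 : 0 < 4 * INR q by lra.
have ec_gt0 := exp_pos (- c).
set d := eps / (4 * INR q * exp (- c)).
have [K small_d] := @exp_ln_div_eventually_le (INR q) d q_gt0 ltac:(apply: Rdiv_lt_0_compat; nra).
have [n0 n0_big] := INR_unbounded (2 * INR q + exp c + Rabs K).
exists n0 => n n_ge; set t := floorN _.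
have hdeg_big : 2 * INR q + exp c + Rabs K < hdeg n q.
  have : 0 <= INR n * (INR q - 2) by apply: Rmult_le_pos; [apply: pos_INR | lra].
  have := le_INR _ _ (elimT leP n_ge); rewrite /hdeg; lra.
have hdeg_ge : 2 * INR q <= hdeg n q by have := exp_pos c; have := Rabs_pos K; lra.
have c_le : c <= ln (hdeg n q).
  by rewrite -(ln_exp c); apply/Rlt_le/ln_increasing; [apply: exp_pos | have := Rabs_pos K; lra].
have t_le : INR t <= hdeg n q / (2 * INR q) * (ln (hdeg n q) - c).
  rewrite /t /a /b (_ : _ - _ = hdeg n q / (2 * INR q) * (ln (hdeg n q) - c)); last by rewrite /hdeg; ring.
  apply: floorN_le; apply: Rmult_le_pos; last lra.
  by apply/Rlt_le/Rdiv_lt_0_compat; lra.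
have TV_ge := TV_hnu_hpi_ge (ltnW hq) q_ge2 hdeg_ge t.
have cutoff := pow_one_sub_cutoff_le q_gt0 hdeg_ge (Rlt_le _ _ hc) t_le.
have small := small_d (hdeg n q) ltac:(have := Rle_abs K; have := exp_pos c; lra).
have := Rmult_le_compat_l _ _ _ (Rlt_le _ _ q4_gt0) cutoff.
have := Rmult_le_compat_l _ _ _ (Rlt_le _ _ (Rmult_lt_0_compat _ _ q4_gt0 ec_gt0)) small.
rewrite (_ : 4 * INR q * exp (- c) * (1 + d) = 4 * INR q * exp (- c) + eps); last by rewrite /d; field; lra.
rewrite /Rdiv Rmult_assoc in TV_ge.
lra.
Qed.
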